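(* Let $A,B\subseteq\mathbb{N}$ be such that $\lim_{n\to\infty}\frac{B(n)-A(n)}{n}$ exists and is $>0$. Then there is a set $D$ with $A\cap B\subseteq D\subseteq B$ and $\lim_{n\to\infty}\frac{D(n)-A(n)}{n}=0$. In particular, $B\setminus D\in\mathcal{D}$.
   Context: $\mathbb{N}=\{1,2,3,\dots\}$. For $A\subseteq\mathbb{N}$ let $A(n)=|A\cap[1,n]|$. Let $\mathcal{D}$ be the collection of all $A\subseteq\mathbb{N}$ for which the asymptotic density $d(A)=\lim_{n\to\infty}\frac{A(n)}{n}$ exists. *)

From HB Require Import structures.
From mathcomp Require Import all_boot all_order all_algebra.
From mathcomp Require Import boolp classical_sets reals topology normedtype sequences.
Set Implicit Arguments. Unset Strict Implicit. Unset Printing Implicit Defensive.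
Import Order.TTheory GRing.Theory Num.Theory numFieldNormedType.Exports.
Local Open Scope classical_set_scope.
Local Open Scope ring_scope.

(* Subsets of N = {1,2,3,...} are modelled as [set nat] contained in the positives. *)
Definition posnat : set nat := [set n | (0 < n)%N].

Definition cnt (A : set nat) (n : nat) : nat :=
  (\sum_(1 <= k < n.+1) (k \in A : nat))%N.

Definition reldiff (R : realType) (X Y : set nat) : nat -> R :=
  fun n => ((cnt X n)%:R - (cnt Y n)%:R) / n%:R.

(* A ∈ 𝒟 : the asymptotic density lim A(n)/n exists (as a real number). *)
Definition has_density (R : realType) (A : set nat) : Prop :=
  exists l : R, (fun n : nat => (cnt A n)%:R / n%:R : R) @ \oo --> l.

From HB Require Import structures.
From mathcomp Require Import all_boot all_order all_algebra.
From mathcomp Require Import boolp classical_sets reals topology normedtype sequences.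
From mathcomp Require Import zify lra.
Import Order.TTheory GRing.Theory Num.Theory numFieldNormedType.Exports.
Local Open Scope classical_set_scope.
Local Open Scope ring_scope.

(* Let f(n) = B(n) - A(n) and let E be the set of strict record times of f.
   Since f moves by at most 1 per step, E(n) = max_(m <= n) f(m), and a record
   time lies in B but not in A.  Put D = B \ E, so that A ∩ B ⊆ D ⊆ B and
   D(n) - A(n) = f(n) - max_(m <= n) f(m).  As f(n)/n -> l >= 0, the running
   maximum also satisfies max_(m <= n) f(m) / n -> l; hence (D(n) - A(n))/n -> 0
   and B \ D = E has density l. *)

Lemma cvg_running_max (R : realType) (f g : nat -> R) (l : R) : 0 <= l ->
  (fun n => f n / n%:R) @ \oo --> l ->
  (forall n, f n <= g n) -> (forall n, exists2 m, (m <= n)%N & g n = f m) ->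
  (fun n => g n / n%:R) @ \oo --> l.
Proof.
move=> l_ge0 fl f_le_g g_attained; apply/cvgrPdist_lt => e e_gt0.
have e2_gt0 : 0 < e / 2 by rewrite divr_gt0.
have [N _ fN] := (cvgrPdist_lt _ _).1 fl _ e2_gt0.
set C := \big[Num.max/0]_(m < N.+1) f m.
have f_le_C m : (m <= N)%N -> f m <= C.
  by rewrite -ltnS => mN; exact: (le_bigmax _ _ (Ordinal mN)).
near=> n.
have n_gt0 : 0 < n%:R :> R by rewrite ltr0n; near: n; exact: nbhs_infty_gt.
have C_lt_en : C < e * n%:R.
  by rewrite -ltr_pdivrMl //; near: n; exact: nbhs_infty_gtr.
have : `|l - f n / n%:R| < e / 2 by apply: fN; near: n; exact: nbhs_infty_ge.
rewrite ltr_distlC => /andP[fn_lo _].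
have gn_lo : f n / n%:R <= g n / n%:R.
  by apply: ler_wpM2r (f_le_g n); rewrite invr_ge0 ltW.
rewrite ltr_distlC; apply/andP; split; first lra.
have [m mn ->] := g_attained n.
rewrite ltr_pdivrMr //.
have [mN|Nm] := leqP m N.
  have := f_le_C m mN; nra.
have := fN m (ltnW Nm); rewrite ltr_distlC => /andP[_].
have m_gt0 : 0 < m%:R :> R by rewrite ltr0n (leq_ltn_trans _ Nm).
have m_le_n : m%:R <= n%:R :> R by rewrite ler_nat.
rewrite ltr_pdivrMr // => fm_hi; nra.
Unshelve. all: by end_near. Qed.

Lemma cnt0 (X : set nat) : cnt X 0 = 0%N.
Proof. by rewrite /cnt big_geq. Qed.

Lemma cntS (X : set nat) n : cnt X n.+1 = (cnt X n + (n.+1 \in X))%N.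
Proof. by rewrite /cnt big_nat_recr. Qed.

Lemma cnt_setD {X Y : set nat} n :
  Y `<=` X -> (cnt (X `\` Y) n + cnt Y n)%N = cnt X n.
Proof.
move=> YX; rewrite /cnt -big_split; apply: eq_bigr => k _ /=.
rewrite in_setD; have [kY|_] := boolP (k \in Y); last by rewrite andbT addn0.
by have /mem_set -> := YX k (set_mem kY).
Qed.

(* Strict record times of k |-> B(k) - A(k), compared with every earlier m
   including m = 0; the difference is written additively to avoid truncated
   subtraction. *)
Definition records (A B : set nat) : set nat :=
  [set k | (0 < k)%N /\
    forall m, (m < k)%N -> (cnt B m + cnt A k < cnt B k + cnt A m)%N].

Lemma records_sub {A B : set nat} : records A B `<=` B `\` A.
Proof.
case=> [[]//|k] [_ /(_ k (ltnSn k))]; rewrite !cntS => step.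
apply: set_mem; rewrite in_setD; move: step.
by case: (_ \in B); case: (_ \in A) => /=; lia.
Qed.

Lemma cnt_records (A B : set nat) n :
  (forall m, (m <= n)%N -> (cnt B m <= cnt (records A B) n + cnt A m)%N) /\
  exists2 m, (m <= n)%N & cnt B m = (cnt (records A B) n + cnt A m)%N.
Proof.
elim: n => [|n [IHle [m0 m0n Em0]]].
  split=> [m|]; last by exists 0%N; rewrite ?cnt0.
  by rewrite leqn0 => /eqP ->; rewrite !cnt0.
have step_le (X : set nat) : (cnt X n <= cnt X n.+1 <= (cnt X n).+1)%N.
  by rewrite cntS; case: (_ \in X) => /=; lia.
have := step_le A; have := step_le B; have := IHle n (leqnn n).
rewrite [cnt (records A B) n.+1]cntS.
have [rec|nrec] := boolP (n.+1 \in records A B) => /= Bn B_step A_step.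
- move: rec; rewrite in_setE => -[_ /(_ m0 (leq_ltn_trans m0n (ltnSn n))) rec_m0].
  split=> [m|]; last by exists n.+1 => //; lia.
  by rewrite leq_eqVlt ltnS => /orP[/eqP->|/IHle]; lia.
- have [m mn not_rec_m] : exists2 m, (m < n.+1)%N &
      (cnt B n.+1 + cnt A m <= cnt B m + cnt A n.+1)%N.
    apply: contra_notP (negP nrec) => no_m; rewrite in_setE; split=> // m mn.
    by rewrite ltnNge; apply/negP => ?; apply: no_m; exists m.
  split=> [m'|]; last by exists m0; [exact: leqW | lia].
  have := IHle m; rewrite -ltnS => /(_ mn) Bm.
  by rewrite leq_eqVlt ltnS => /orP[/eqP->|/IHle]; lia.
Qed.

Theorem lemma3p13 (R : realType) (A B : set nat)
  (hA : A `<=` posnat) (hB : B `<=` posnat)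
  (hlim : exists l : R, 0 < l /\ reldiff R B A @ \oo --> l) :
  exists D : set nat,
    [/\ A `&` B `<=` D, D `<=` B,
        reldiff R D A @ \oo --> (0 : R)
      & has_density R (B `\` D)].
Proof.
have [l [l_gt0 BA_l]] := hlim.
set E := records A B.
have E_sub_B : E `<=` B by move=> k Ek; case: (records_sub k Ek).
have E_l : (fun n => (cnt E n)%:R / n%:R : R) @ \oo --> l.
  apply: (@cvg_running_max R (fun n => (cnt B n)%:R - (cnt A n)%:R)
    _ _ (ltW l_gt0) BA_l) => n.
    have [B_le _] := cnt_records A B n.
    by rewrite lerBlDr -natrD ler_nat B_le.
  have [_ [m mn Bm]] := cnt_records A B n.
  by exists m => //; rewrite Bm natrD addrK.
have DA_0 : reldiff R (B `\` E) A @ \oo --> 0.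
  have -> : reldiff R (B `\` E) A = reldiff R B A \- (fun n => (cnt E n)%:R / n%:R).
    apply/funext => n; rewrite /reldiff /= -(cnt_setD n E_sub_B) natrD.
    by rewrite -mulrBl [_ + _ - _]addrAC addrK.
  by rewrite -(subrr l); apply: cvgB.
exists (B `\` E); split.
- by move=> k [Ak Bk]; split=> // Ek; have [_ /(_ Ak)] := records_sub k Ek.
- exact: subDsetl.
- exact: DA_0.
- by rewrite setDD setIidr //; exists l.
Qed.
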